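(* Let $\alpha>0$, $\beta>0$, $D>0$, $W\ge0$ and $T\ge W+1$. Let $X=[-D/2,D/2]$ and $x_0=0$, and let $0<\nu\le D$. Let $\theta_1=\dots=\theta_W=0$, let $\theta_{W+1}$ satisfy $\mathbb P(\theta_{W+1}=\nu/2)=\mathbb P(\theta_{W+1}=-\nu/2)=1/2$, and let $\theta_t=\theta_{W+1}$ for $W+2\le t\le T$. Let $f_t(x)=\frac\alpha2(x-\theta_t)^2$ and $x^*=\arg\min_{x\in X^T}\sum_{t=1}^T\big(f_t(x_t)+\frac\beta2(x_t-x_{t-1})^2\big)$. Then for any online deterministic algorithm $\mathcal A$ with prediction window $W$, $$\mathbb E|x_1^{\mathcal A}-x_1^*|^2\ge\frac{a_{1,1+W}^2\nu^2}{4},$$ where $a_{1,1+W}$ is the $(1,1+W)$ entry of $A=H^{-1}$.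
   Context: Online deterministic algorithm with prediction window $W$: $x_t^{\mathcal A}=\mathcal A_t(I_t)$, where $\mathcal A_t$ is deterministic and $I_t$ consists of fixed initial knowledge together with $f_1,\dots,f_{\min(t+W-1,T)}$. In particular, $x_1^{\mathcal A}$ depends only on $\theta_1,\dots,\theta_W$. $H\in\mathbb R^{T\times T}$ is the symmetric tridiagonal matrix with diagonal entries $1+2\beta/\alpha$ (the last one being $1+\beta/\alpha$) and off-diagonal entries $-\beta/\alpha$. It satisfies $x^*=H^{-1}\theta$. *)

From HB Require Import structures.
From mathcomp Require Import all_boot all_order all_algebra.
From mathcomp Require Import reals.
Set Implicit Arguments. Unset Strict Implicit. Unset Printing Implicit Defensive.
Import Order.TTheory GRing.Theory Num.Theory.
Local Open Scope ring_scope.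

Section Defs.
Variable R : realType.

(* Trajectories are indexed by nat; x 0 is the initial point x_0, and
   x 1, ..., x T are the decisions. *)

Definition feasible (D : R) (T : nat) (x : nat -> R) : Prop :=
  forall t : nat, (1 <= t <= T)%N -> - (D / 2) <= x t <= D / 2.

Definition total_cost (alpha beta : R) (T : nat) (theta x : nat -> R) : R :=
  \sum_(1 <= t < T.+1)
     (alpha / 2 * (x t - theta t) ^+ 2 + beta / 2 * (x t - x t.-1) ^+ 2).

Definition is_offline_opt (alpha beta D : R) (T : nat) (theta x : nat -> R)
  : Prop :=
  x 0%N = 0 /\ feasible D T x /\
  forall y : nat -> R, y 0%N = 0 -> feasible D T y ->
    total_cost alpha beta T theta x <= total_cost alpha beta T theta y.

Definition stage_fun (alpha : R) (theta : nat -> R) : nat -> R -> R :=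
  fun t x => alpha / 2 * (x - theta t) ^+ 2.

(* An online deterministic algorithm with prediction window W: the decision
   at time t is a deterministic function alg t of the sequence of cost
   functions (the fixed initial knowledge, i.e. the problem parameters, is
   implicit in alg), which may only depend on f_1, ..., f_{min(t+W-1, T)}. *)
Definition online_with_window (W T : nat)
  (alg : nat -> (nat -> R -> R) -> R) : Prop :=
  forall (t : nat) (F G : nat -> R -> R),
    (forall s : nat, (1 <= s <= minn (t + W - 1) T)%N -> F s = G s) ->
    alg t F = alg t G.

(* The instance: theta_1 = ... = theta_W = 0 and theta_t = s * nu/2 for
   W+1 <= t <= T, where s = +1 or -1 is the random sign. *)
Definition theta_inst (W : nat) (nu s : R) : nat -> R :=
  fun t => if (t <= W)%N then 0 else s * (nu / 2).

(* The T x T tridiagonal matrix H (0-indexed rows/columns). *)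
Definition Hmat (alpha beta : R) (T : nat) : 'M[R]_T :=
  \matrix_(i < T, j < T)
    (if (i : nat) == j then
       (if i.+1 == T then 1 + beta / alpha else 1 + 2 * (beta / alpha))
     else if (i.+1 == j) || (j.+1 == i) then - (beta / alpha) else 0).

End Defs.

(* Entry of a square matrix at 0-based nat indices (0 if out of range). *)
Definition mxnat (R : pzRingType) (n : nat) (A : 'M[R]_n) (i j : nat) : R :=
  match @insub _ (fun k => (k < n)%N) 'I_n i,
        @insub _ (fun k => (k < n)%N) 'I_n j with
  | Some k, Some l => A k l
  | _, _ => 0
  end.

From HB Require Import structures.
From mathcomp Require Import all_boot all_order all_algebra.
From mathcomp Require Import reals.
From mathcomp Require Import ring lra zify.
Set Implicit Arguments. Unset Strict Implicit. Unset Printing Implicit Defensive.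
Import Order.TTheory GRing.Theory Num.Theory.
Local Open Scope ring_scope.

(* The offline optimum is the unique stationary point of the strictly convex
   cost, i.e. the solution [H^-1 theta] of the tridiagonal first-order system.
   Clamping a trajectory to an interval that contains 0 and all the data does
   not increase the cost; this maximum principle shows that the stationary
   point stays in [-nu/2, nu/2], so the constraint set [X] is inactive, and that
   [H^-1] is monotone.  The two instances coincide up to time [W], so the
   algorithm plays the same [x_1] on both, whereas the optima at time 1 differ
   by at least [nu * a_(1,1+W)] >= 0, because the data differ by [nu] from time
   [W + 1] on.  Two points at distance d are at average squared distance at
   least d^2/4 from any point. *)

Lemma sum_by_parts (R : comPzRingType) (d z : nat -> R) (T : nat) : d 0%N = 0 ->
  \sum_(1 <= t < T.+1) (d t - d t.-1) * (z t - z t.-1) =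
  \sum_(1 <= t < T.+1) d t * ((z t - z t.-1) - (z t.+1 - z t))
  + d T * (z T.+1 - z T).
Proof.
move=> d0; elim: T => [|T IH]; first by rewrite !big_geq // d0 mul0r addr0.
by rewrite big_nat_recr // IH [in RHS]big_nat_recr //=; ring.
Qed.

Lemma sum_nat_delta (R : pzSemiRingType) (l m k : nat) (F : nat -> R) :
  \sum_(l <= j < m) (j == k)%:R * F j = (l <= k < m)%:R * F k.
Proof.
rewrite (eq_bigr (fun j => if j == k then F j else 0)); last first.
  by move=> j _; case: eqP; rewrite ?mul1r ?mul0r.
by rewrite -big_mkcond big_nat1_eq; case: ifP; rewrite ?mul1r ?mul0r.
Qed.

Lemma avg_sqr_dist_ge (R : realFieldType) (a p m d : R) : 0 <= d <= p - m ->
  d ^+ 2 / 4 <= 2^-1 * (a - p) ^+ 2 + 2^-1 * (a - m) ^+ 2.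
Proof.
move=> /andP[d_ge0 d_le].
(* [(a - p)^2 + (a - m)^2 = ((p - m)^2 + (2 a - p - m)^2) / 2] *)
have : d ^+ 2 <= (p - m) ^+ 2 by rewrite ler_sqr ?nnegrE //; lra.
have := sqr_ge0 (2 * a - p - m); nra.
Qed.

Section Clamp.
Variables (R : realDomainType) (lo hi : R).

Definition clamp (a : R) : R := if a < lo then lo else if hi < a then hi else a.

Lemma clamp_id (a : R) : lo <= a <= hi -> clamp a = a.
Proof. by move=> /andP[la ah]; rewrite /clamp ltNge la /= ltNge ah. Qed.

Lemma clamp_in (a : R) : lo <= hi -> lo <= clamp a <= hi.
Proof.
move=> lo_hi; rewrite /clamp.
by case: ltrP => ?; [|case: ltrP => ?]; apply/andP; split; lra.
Qed.

Lemma clamp_sqr_dist (a b : R) : lo <= hi -> (clamp a - clamp b) ^+ 2 <= (a - b) ^+ 2.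
Proof.
move=> lo_hi; have := sqr_ge0 (a - b); rewrite /clamp.
by case: (ltrP a lo); case: (ltrP hi a); case: (ltrP b lo); case: (ltrP hi b); nra.
Qed.

Lemma clamp_sqr_dist_in (a c : R) : lo <= c <= hi -> (clamp a - c) ^+ 2 <= (a - c) ^+ 2.
Proof.
move=> c_in; rewrite -{1}(clamp_id c_in) clamp_sqr_dist //.
by case/andP: c_in; apply: le_trans.
Qed.

End Clamp.

Section Stationarity.
Variables (R : realType) (alpha beta : R) (T : nat).
Hypotheses (alpha_gt0 : 0 < alpha) (beta_gt0 : 0 < beta).

Local Notation J := (total_cost alpha beta T).

(* [z T.+1] is a ghost value: when it equals [z T], [cost_grad theta z t] is
   the partial derivative of [J theta] at [z] for every [1 <= t <= T]. *)
Definition cost_grad (theta z : nat -> R) (t : nat) : R :=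
  alpha * (z t - theta t) + beta * (z t - z t.-1) - beta * (z t.+1 - z t).

Definition stationary (theta z : nat -> R) : Prop :=
  [/\ z 0%N = 0, z T.+1 = z T &
      forall t, (1 <= t <= T)%N -> cost_grad theta z t = 0].

Lemma total_costB (theta y z : nat -> R) :
  y 0%N = 0 -> z 0%N = 0 -> z T.+1 = z T ->
  J theta y - J theta z =
  \sum_(1 <= t < T.+1) (alpha / 2 * (y t - z t) ^+ 2
       + beta / 2 * ((y t - z t) - (y t.-1 - z t.-1)) ^+ 2)
  + \sum_(1 <= t < T.+1) (y t - z t) * cost_grad theta z t.
Proof.
move=> y0 z0 zT.
have parts : \sum_(1 <= t < T.+1) ((y t - z t) - (y t.-1 - z t.-1)) * (z t - z t.-1)
  = \sum_(1 <= t < T.+1) (y t - z t) * ((z t - z t.-1) - (z t.+1 - z t)).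
  move: (@sum_by_parts _ (fun t => y t - z t) z T).
  by rewrite /= y0 z0 subrr zT subrr mulr0 addr0; apply.
have grad_split : \sum_(1 <= t < T.+1) (y t - z t) * cost_grad theta z t =
  \sum_(1 <= t < T.+1) alpha * ((y t - z t) * (z t - theta t))
  + beta * \sum_(1 <= t < T.+1) (y t - z t) * ((z t - z t.-1) - (z t.+1 - z t)).
  by rewrite mulr_sumr -big_split; apply: eq_bigr => t _ /=; rewrite /cost_grad; ring.
rewrite grad_split -parts /total_cost -sumrB !mulr_sumr -!big_split.
apply: eq_bigr => t _ /=.
have two_neq0 : (2 : R) != 0 by rewrite pnatr_eq0.
by field.
Qed.

Lemma stationary_cost_gap (theta y z : nat -> R) :
  stationary theta z -> y 0%N = 0 ->
  forall t, (1 <= t <= T)%N -> alpha / 2 * (y t - z t) ^+ 2 <= J theta y - J theta z.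
Proof.
move=> [z0 zT grad0] y0 t tT.
have grad_sum0 : \sum_(1 <= s < T.+1) (y s - z s) * cost_grad theta z s = 0.
  by rewrite big_nat_cond big1 // => s /andP[sT _]; rewrite grad0 ?mulr0.
rewrite total_costB // grad_sum0 addr0.
have ha2 : 0 <= alpha / 2 by rewrite divr_ge0 // ltW.
have hb2 : 0 <= beta / 2 by rewrite divr_ge0 // ltW.
rewrite (bigD1_seq t) ?iota_uniq ?mem_index_iota //= -[leLHS]addr0 lerD //.
  by rewrite lerDl mulr_ge0 ?sqr_ge0.
by apply: sumr_ge0 => s _; rewrite addr_ge0 // mulr_ge0 ?sqr_ge0.
Qed.

Lemma stationary_le_cost_eq (theta y z : nat -> R) :
  stationary theta z -> y 0%N = 0 -> J theta y <= J theta z ->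
  forall t, (1 <= t <= T)%N -> y t = z t.
Proof.
move=> hz y0 le_yz t tT; have := stationary_cost_gap hz y0 tT.
have ha2 : 0 < alpha / 2 by rewrite divr_gt0.
rewrite -subr_le0 in le_yz => gap; apply/eqP; rewrite -subr_eq0 -sqrf_eq0.
by rewrite eq_le sqr_ge0 andbT -(pmulr_rle0 _ ha2) (le_trans gap).
Qed.

Lemma stationary_unique (theta z1 z2 : nat -> R) :
  stationary theta z1 -> stationary theta z2 ->
  forall t, (1 <= t <= T)%N -> z1 t = z2 t.
Proof.
move=> h1 h2 t tT; have [] := lerP (J theta z1) (J theta z2) => [le12|/ltW le21].
  by rewrite (stationary_le_cost_eq h2 _ le12) //; case: h1.
by rewrite (stationary_le_cost_eq h1 _ le21) //; case: h2.
Qed.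

Lemma offline_opt_stationary (D : R) (theta x z : nat -> R) :
  stationary theta z -> feasible D T z -> is_offline_opt alpha beta D T theta x ->
  forall t, (1 <= t <= T)%N -> x t = z t.
Proof.
move=> hz z_feas [x0 [_ x_min]]; apply: (stationary_le_cost_eq hz) => //.
by apply: x_min => //; case: hz.
Qed.

(* Applying [p] pointwise does not increase the cost, while the stationary
   point is the strict minimizer. *)
Lemma stationary_fixed_contraction (theta z : nat -> R) (p : R -> R) :
  stationary theta z -> p 0 = 0 ->
  (forall a b, (p a - p b) ^+ 2 <= (a - b) ^+ 2) ->
  (forall t a, (1 <= t <= T)%N -> (p a - theta t) ^+ 2 <= (a - theta t) ^+ 2) ->
  forall t, (1 <= t <= T)%N -> p (z t) = z t.
Proof.
move=> hz p0 p_lip p_closer; apply: (stationary_le_cost_eq hz).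
  by case: hz => z0 _ _; rewrite /= z0.
apply: ler_sum_nat => t tT; apply: lerD; apply: ler_wpM2l.
- by rewrite divr_ge0 // ltW.
- exact: p_closer.
- by rewrite divr_ge0 // ltW.
- exact: p_lip.
Qed.

Lemma stationary_lincomb (k : R) (theta1 theta2 z1 z2 : nat -> R) :
  stationary theta1 z1 -> stationary theta2 z2 ->
  stationary (fun t => theta1 t + k * theta2 t) (fun t => z1 t + k * z2 t).
Proof.
move=> [z10 z1T g1] [z20 z2T g2]; split; first by rewrite z10 z20 mulr0 addr0.
  by rewrite z1T z2T.
move=> t tT; transitivity (cost_grad theta1 z1 t + k * cost_grad theta2 z2 t).
  by rewrite /cost_grad; ring.
by rewrite g1 // g2 // mulr0 addr0.
Qed.

Lemma stationary_in_interval (lo hi : R) (theta z : nat -> R) :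
  lo <= 0 <= hi -> stationary theta z ->
  (forall t, (1 <= t <= T)%N -> lo <= theta t <= hi) ->
  forall t, (1 <= t <= T)%N -> lo <= z t <= hi.
Proof.
move=> lo0hi hz theta_in t tT; have lo_hi : lo <= hi by case/andP: lo0hi; apply: le_trans.
rewrite -(stationary_fixed_contraction (p := clamp lo hi) hz _ _ _ tT).
- exact: clamp_in.
- exact: clamp_id.
- by move=> a c; apply: clamp_sqr_dist.
- by move=> s a sT; apply: clamp_sqr_dist_in; apply: theta_in.
Qed.

End Stationarity.

Section TridiagonalSystem.
Variables (R : realType) (alpha beta : R) (n : nat).
Hypotheses (alpha_gt0 : 0 < alpha) (beta_gt0 : 0 < beta).

Local Notation H := (Hmat alpha beta n.+1).
Local Notation b := (beta / alpha).

(* Reads [w] as a trajectory with [x_0 = 0], [x_(j+1) = w_j], and the ghost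
   value [x_(n+2) = x_(n+1)] expected by [stationary]. *)
Definition col_seq (w : 'cV[R]_n.+1) : nat -> R :=
  fun t => if t is t'.+1 then w (inord (minn t' n)) 0 else 0.

Lemma col_seqE (w : 'cV[R]_n.+1) (j : 'I_n.+1) : col_seq w j.+1 = w j 0.
Proof. by rewrite /= (minn_idPl (leq_ord j)) inord_val. Qed.

Lemma col_seq_ghost (w : 'cV[R]_n.+1) : col_seq w n.+2 = col_seq w n.+1.
Proof. by rewrite /= minnn (minn_idPr (leqnSn n)). Qed.

Lemma HmatE (i j : 'I_n.+1) :
  H i j = (j == i :> nat)%:R * (if i.+1 == n.+1 then 1 + b else 1 + 2 * b)
          - b * ((j == i.+1 :> nat)%:R + (j.+1 == i :> nat)%:R).
Proof.
rewrite mxE; have [<- | _] := eqVneq (i : nat) j.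
  by rewrite (ltn_eqF (ltnSn i)) (gtn_eqF (ltnSn i)) /=; ring.
rewrite (eq_sym (j : nat)).
by case: (eqVneq i.+1 j) => [e1|_]; case: (eqVneq j.+1 i) => [e2|_] /=; [lia | ring..].
Qed.

Lemma Hmat_mulE (w : 'cV[R]_n.+1) (i : 'I_n.+1) :
  (H *m w) i 0 = col_seq w i.+1 + b * (col_seq w i.+1 - col_seq w i)
                 - b * (col_seq w i.+2 - col_seq w i.+1).
Proof.
set z := col_seq w; pose d := if i.+1 == n.+1 then 1 + b else 1 + 2 * b.
pose F (j : nat) := (j == i)%:R * (d * z j.+1) - b * ((j == i.+1)%:R * z j.+1)
            - b * ((j.+1 == i)%:R * z j.+1).
rewrite mxE (eq_bigr (fun j : 'I_n.+1 => F j)) -?(big_mkord xpredT F); last first.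
  by move=> j _; rewrite HmatE -/d /F /z col_seqE; ring.
have shift : \sum_(0 <= j < n.+1) (j.+1 == i)%:R * z j.+1 =
               \sum_(0 <= j < n.+2) (j == i)%:R * z j.
  by rewrite [RHS]big_nat_recl // {3}/z /= mulr0 add0r.
rewrite !sumrB -!mulr_sumr shift !sum_nat_delta !leq0n ltn_ord.
have -> : (i < n.+2)%N by have := ltn_ord i; lia.
rewrite /d; case: (eqVneq i.+1 n.+1) => [[i_n] | i_neq].
  by rewrite i_n ltnn /z col_seq_ghost /=; ring.
have -> : (i.+1 < n.+1)%N by move: i_neq (ltn_ord i); lia.
by rewrite /=; ring.
Qed.

Lemma cost_grad_col_seq (theta : nat -> R) (w : 'cV[R]_n.+1) (i : 'I_n.+1) :
  cost_grad alpha beta theta (col_seq w) i.+1 = alpha * ((H *m w) i 0 - theta i.+1).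
Proof. by rewrite Hmat_mulE /cost_grad; field; rewrite gt_eqF. Qed.

Lemma stationary_col_seq (theta : nat -> R) (w : 'cV[R]_n.+1) :
  (forall i : 'I_n.+1, (H *m w) i 0 = theta i.+1) ->
  stationary alpha beta n.+1 theta (col_seq w).
Proof.
move=> Hw; split=> //; first exact: col_seq_ghost.
move=> t /andP[t_gt0 t_le]; have -> : t = (@inord n t.-1).+1 by rewrite inordK; lia.
by rewrite cost_grad_col_seq Hw subrr mulr0.
Qed.

Lemma Hmat_unit : H \in unitmx.
Proof.
rewrite unitmxE unitfE -det_tr; apply/negP => /det0P[v v_neq0 vHT0].
have Hv0 : H *m v^T = 0 by rewrite -[H]trmxK -trmx_mul vHT0 trmx0.
have v_stat : stationary alpha beta n.+1 (fun=> 0) (col_seq v^T).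
  by apply: stationary_col_seq => i; rewrite Hv0 mxE.
have zero_stat : stationary alpha beta n.+1 (fun=> 0) (fun=> 0).
  by split=> // t _; rewrite /cost_grad; ring.
apply: (negP v_neq0); apply/eqP/matrixP => k j; rewrite (ord1 k) mxE.
have := col_seqE v^T j; rewrite mxE => <-.
by apply: (stationary_unique alpha_gt0 beta_gt0 v_stat zero_stat); have := ltn_ord j; lia.
Qed.

Definition offline_sol (theta : nat -> R) : nat -> R :=
  col_seq (invmx H *m \col_(i < n.+1) theta i.+1).

Lemma stationary_offline_sol (theta : nat -> R) :
  stationary alpha beta n.+1 theta (offline_sol theta).
Proof. by apply: stationary_col_seq => i; rewrite mulKVmx ?Hmat_unit // mxE. Qed.

Lemma offline_sol_delta (k : nat) : (k < n.+1)%N ->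
  offline_sol (fun t => (t == k.+1)%:R) 1 = mxnat (invmx H) 0 k.
Proof.
move=> k_lt.
have delta : \col_(i < n.+1) (i.+1 == k.+1)%:R = delta_mx (Ordinal k_lt) 0 :> 'cV[R]_n.+1.
  by apply/matrixP => i j; rewrite (ord1 j) !mxE eqSS andbT.
rewrite /offline_sol -[1%N]/(val (0 : 'I_n.+1)).+1 col_seqE delta -colE mxE.
by rewrite /mxnat -[0%N]/(val (0 : 'I_n.+1)) -[k]/(val (Ordinal k_lt)) !valK.
Qed.

End TridiagonalSystem.

Lemma theta_inst_bounded (R : realType) (W : nat) (nu s : R) (t : nat) :
  0 <= nu -> s = 1 \/ s = -1 -> - (nu / 2) <= theta_inst W nu s t <= nu / 2.
Proof. by rewrite /theta_inst => ? [] ->; case: ifP => _; apply/andP; split; lra. Qed.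

Lemma theta_inst_jump (R : realType) (W : nat) (nu : R) (t : nat) : 0 <= nu ->
  0 <= theta_inst W nu 1 t + -1 * theta_inst W nu (-1) t + - nu * (t == W.+1)%:R <= nu.
Proof.
move=> ?; rewrite /theta_inst; case: (ltngtP t W.+1) => [t_lt | t_gt | ->].
- rewrite (_ : (t <= W)%N = true) /=; last by lia.
  by apply/andP; split; lra.
- rewrite (_ : (t <= W)%N = false) /=; last by lia.
  by apply/andP; split; lra.
- by rewrite ltnn /=; apply/andP; split; lra.
Qed.

Lemma offline_opt_theta_inst (R : realType) (alpha beta D nu s : R) (W n : nat)
    (x : nat -> R) :
  0 < alpha -> 0 < beta -> 0 <= nu <= D -> s = 1 \/ s = -1 ->
  is_offline_opt alpha beta D n.+1 (theta_inst W nu s) x ->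
  forall t, (1 <= t <= n.+1)%N -> x t = offline_sol alpha beta n (theta_inst W nu s) t.
Proof.
move=> alpha_gt0 beta_gt0 /andP[nu_ge0 nu_le] s_sign.
have sol := stationary_offline_sol n alpha_gt0 beta_gt0 (theta_inst W nu s).
apply: (offline_opt_stationary alpha_gt0 beta_gt0 sol) => t tT.
have half_nu : - (nu / 2) <= 0 <= nu / 2 by apply/andP; split; lra.
have /andP[] := stationary_in_interval alpha_gt0 beta_gt0 half_nu sol
  (fun t _ => theta_inst_bounded W t nu_ge0 s_sign) tT.
by move=> *; apply/andP; split; lra.
Qed.

Lemma offline_sol_indicator_ge0 (R : realType) (alpha beta : R) (n k t : nat) :
  0 < alpha -> 0 < beta -> (1 <= t <= n.+1)%N ->
  0 <= offline_sol alpha beta n (fun s => (s == k)%:R) t.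
Proof.
move=> alpha_gt0 beta_gt0 tT.
have sol := stationary_offline_sol n alpha_gt0 beta_gt0 (fun s => (s == k)%:R).
have zero_one : 0 <= (0 : R) <= 1 by rewrite lexx ler01.
have indicator_in s : (1 <= s <= n.+1)%N -> 0 <= ((s == k)%:R : R) <= 1.
  by case: eqP; rewrite /= ?lexx ?ler01.
by have /andP[] := stationary_in_interval alpha_gt0 beta_gt0 zero_one sol indicator_in tT.
Qed.

(* The two instances differ by [nu] from time [W + 1] on, which dominates [nu]
   times the indicator of [W + 1]; conclude by linearity and the maximum
   principle [stationary_in_interval]. *)
Lemma offline_sol_theta_inst_gap (R : realType) (alpha beta nu : R) (W n t : nat) :
  0 < alpha -> 0 < beta -> 0 <= nu -> (1 <= t <= n.+1)%N ->
  nu * offline_sol alpha beta n (fun s => (s == W.+1)%:R) t <=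
  offline_sol alpha beta n (theta_inst W nu 1) t
  - offline_sol alpha beta n (theta_inst W nu (-1)) t.
Proof.
move=> alpha_gt0 beta_gt0 nu_ge0 tT.
have sol := stationary_offline_sol n alpha_gt0 beta_gt0.
have gap_stat := stationary_lincomb (- nu) (stationary_lincomb (-1)
  (sol (theta_inst W nu 1)) (sol (theta_inst W nu (-1)))) (sol (fun s => (s == W.+1)%:R)).
have zero_nu : (0 : R) <= 0 <= nu by apply/andP; split; lra.
have /andP[/= gap_ge0 _] := stationary_in_interval alpha_gt0 beta_gt0 zero_nu gap_stat
  (fun s _ => theta_inst_jump W s nu_ge0) tT.
lra.
Qed.

Theorem lemma10 (R : realType) (alpha beta D nu : R) (W T : nat)
  (halpha : 0 < alpha) (hbeta : 0 < beta) (hD : 0 < D)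
  (hT : (W + 1 <= T)%N) (hnu0 : 0 < nu) (hnuD : nu <= D)
  (alg : nat -> (nat -> R -> R) -> R)
  (halg : online_with_window W T alg)
  (xp xm : nat -> R)
  (hxp : is_offline_opt alpha beta D T (theta_inst W nu 1) xp)
  (hxm : is_offline_opt alpha beta D T (theta_inst W nu (-1)) xm) :
  2^-1 * (alg 1%N (stage_fun alpha (theta_inst W nu 1)) - xp 1%N) ^+ 2
  + 2^-1 * (alg 1%N (stage_fun alpha (theta_inst W nu (-1))) - xm 1%N) ^+ 2
  >= (mxnat (invmx (Hmat alpha beta T)) 0 W) ^+ 2 * nu ^+ 2 / 4.
Proof.
case: T => [|n] in hT halg hxp hxm *; first by rewrite addn1 in hT.
have W_lt : (W < n.+1)%N by rewrite -addn1.
have nu_ge0 : 0 <= nu by apply: ltW.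
have nu_in : 0 <= nu <= D by rewrite nu_ge0 hnuD.
rewrite (offline_opt_theta_inst halpha hbeta nu_in (or_introl erefl) hxp) //.
rewrite (offline_opt_theta_inst halpha hbeta nu_in (or_intror erefl) hxm) //.
have -> : alg 1%N (stage_fun alpha (theta_inst W nu (-1))) =
          alg 1%N (stage_fun alpha (theta_inst W nu 1)).
  apply: halg => t; rewrite add1n => t_le.
  by rewrite /stage_fun /theta_inst !ifT //; lia.
rewrite -(offline_sol_delta alpha beta W_lt) [_ ^+ 2 * nu ^+ 2]mulrC -exprMn.
apply: avg_sqr_dist_ge; apply/andP; split.
- by rewrite mulr_ge0 ?offline_sol_indicator_ge0.
- exact: offline_sol_theta_inst_gap.
Qed.
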